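(* Consider a transient MDP with a sink state as in the context. For each $\pi\in\Pi_{\mathrm{SD}}$ and $t\in\mathbb N$: \[ \lim_{\beta\to0}g_t(\pi,\beta)=g_t(\pi,0),\quad \lim_{\beta\to0}g^\star_t(\beta)=g^\star_t(0),\quad \lim_{\beta\to0}g_\infty(\pi,\beta)=g_\infty(\pi,0),\quad \lim_{\beta\to0}g^\star_\infty(\beta)=g^\star_\infty(0), \] where $\beta\to0$ from above.
   Context: MDP: states $\mathcal S=\{1,\dots,S\}$ plus sink state $e$ ($p(e,a,e)=1$, $r(e,a,e)=0$); finite actions; transitions $p(s,a,s')$, real rewards $r(s,a,s')$ of arbitrary sign; initial distribution $\mu$ on $\mathcal S$ with $\mu>0$. Transience: for every stationary deterministic policy $\pi$, $\sum_{t\ge0}\mathbb P^{\pi,s}[\tilde s_t=s']<\infty$ for all $s,s'\in\mathcal S$. $\Pi_{\mathrm{SD}}$ stationary deterministic, $\Pi_{\mathrm{HR}}$ history-dependent randomized policies. $\mathrm{ERM}_\beta[\tilde x]=-\beta^{-1}\log\mathbb E e^{-\beta\tilde x}$ for $\beta>0$ and $\mathrm{ERM}_0=\mathbb E$. $g_t(\pi,\beta)=\mathrm{ERM}^{\pi,\mu}_\beta[\sum_{k=0}^t r(\tilde s_k,\tilde a_k,\tilde s_{k+1})]$, $g^\star_t(\beta)=\sup_{\pi\in\Pi_{\mathrm{HR}}}g_t(\pi,\beta)$, $g_\infty(\pi,\beta)=\liminf_t g_t(\pi,\beta)$, $g^\star_\infty(\beta)=\liminf_t g^\star_t(\beta)$.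 *)

From mathcomp Require Import all_boot all_order all_algebra.
From mathcomp Require Import all_classical all_reals all_analysis.
Set Implicit Arguments. Unset Strict Implicit. Unset Printing Implicit Defensive.
Import Order.TTheory GRing.Theory Num.Theory.
Local Open Scope ring_scope.

(* States: [option S]; [Some s] is a state of the set 𝒮 = S, [None] is the sink e.
   A history h_t = (s_0,a_0,...,s_{t-1},a_{t-1},s_t) is represented by the
   past pairs [seq (s_k,a_k)] together with the current state s_t. *)
Definition policy (S A : finType) (R : realType) :=
  seq (option S * A) -> option S -> A -> R.

Definition is_HR (S A : finType) (R : realType) (pi : policy S A R) : Prop :=
  forall h s, (forall a, 0 <= pi h s a) /\ \sum_(a : A) pi h s a = 1.

Definition sd_policy (S A : finType) (R : realType) (d : option S -> A)
  : policy S A R := fun _ s a => if a == d s then 1 else 0.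

(* Expectation, under the process started at history (h, s) and driven by pi
   and p, of a function F of the next n transitions
   [:: (s_k,a_k,s_{k+1}); ...]  (finite-horizon Ionescu-Tulcea law). *)
Fixpoint trajE (S A : finType) (R : realType)
  (p : option S -> A -> option S -> R) (pi : policy S A R) (n : nat)
  (h : seq (option S * A)) (s : option S)
  (F : seq (option S * A * option S) -> R) {struct n} : R :=
  match n with
  | 0 => F [::]
  | n'.+1 => \sum_(a : A) pi h s a *
              \sum_(s' : option S) p s a s' *
                 trajE p pi n' (rcons h (s, a)) s'
                       (fun tr => F ((s, a, s') :: tr))
  end.

Definition expect (S A : finType) (R : realType)
  (p : option S -> A -> option S -> R) (mu : S -> R) (pi : policy S A R)
  (n : nat) (F : seq (option S * A * option S) -> R) : R :=
  \sum_(s : S) mu s * trajE p pi n [::] (Some s) F.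

Definition ret (S A : finType) (R : realType)
  (r : option S -> A -> option S -> R) (tr : seq (option S * A * option S)) : R :=
  \sum_(x <- tr) r x.1.1 x.1.2 x.2.

(* g_t(pi,beta) = ERM_beta[ sum_{k=0}^t r(s_k,a_k,s_{k+1}) ]  (t+1 transitions);
   ERM_0 = E, ERM_beta[X] = -beta^{-1} log E e^{-beta X} for beta > 0. *)
Definition g (S A : finType) (R : realType)
  (p r : option S -> A -> option S -> R) (mu : S -> R) (pi : policy S A R)
  (t : nat) (beta : R) : R :=
  if beta == 0 then expect p mu pi t.+1 (ret r)
  else - beta^-1 * ln (expect p mu pi t.+1 (fun tr => expR (- beta * ret r tr))).

Definition gstar (S A : finType) (R : realType)
  (p r : option S -> A -> option S -> R) (mu : S -> R) (t : nat) (beta : R)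
  : \bar R :=
  ereal_sup [set (g p r mu pi t beta)%:E | pi in [set pi | is_HR pi]].

Definition ginf (S A : finType) (R : realType)
  (p r : option S -> A -> option S -> R) (mu : S -> R) (pi : policy S A R)
  (beta : R) : \bar R :=
  limn_einf (fun t => (g p r mu pi t beta)%:E).

Definition gstarinf (S A : finType) (R : realType)
  (p r : option S -> A -> option S -> R) (mu : S -> R) (beta : R) : \bar R :=
  limn_einf (fun t => gstar p r mu t beta).

Definition state_prob (S A : finType) (R : realType)
  (p : option S -> A -> option S -> R) (pi : policy S A R) (s s' : option S)
  (t : nat) : R :=
  trajE p pi t [::] s (fun tr => if last s [seq x.2 | x <- tr] == s' then 1 else 0).

Definition transient (S A : finType) (R : realType)
  (p : option S -> A -> option S -> R) : Prop :=
  forall (d : option S -> A) (s s' : S),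
    exists M : R, forall n, \sum_(k < n) state_prob p (sd_policy R d) (Some s) (Some s') k <= M.

From mathcomp Require Import all_boot all_order all_algebra.
From mathcomp Require Import all_classical all_reals all_analysis.
From mathcomp Require Import ring lra.
Import Order.TTheory GRing.Theory Num.Theory.
Import numFieldNormedType.Exports.
Set Implicit Arguments. Unset Strict Implicit. Unset Printing Implicit Defensive.
Local Open Scope ring_scope.
Local Open Scope classical_set_scope.

(* For [0 < b <= c / 2] the entropic risk of the return [X] satisfies
   [E X - C b <= ERM_b X <= E X]: the upper bound is Jensen, the lower one
   follows from [expR (- b x) <= 1 - b x + b^2 K (expR (c x) + expR (- c x))]
   and [ln z <= z - 1], with [C] depending only on [c] and a bound on the
   moments [E expR (+- c X)].  Those moments are bounded uniformly in the
   policy and the horizon: transience bounds the expected visits to the states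
   under each of the finitely many stationary deterministic policies, hence,
   through value iteration, under every history-dependent policy, and for
   small [c] each visit multiplies the moment by at most [1 + 1/B].  A
   sandwich of width [O(b)], uniform in policy and horizon, survives the
   supremum over policies and the liminf over horizons. *)

Lemma ler_term_sum (R : numDomainType) (I : finType) (F : I -> R) i :
  (forall j, 0 <= F j) -> F i <= \sum_j F j.
Proof. by move=> F_ge0; rewrite (bigD1 i) //= lerDl sumr_ge0. Qed.

Section StationaryDeterministic.
Variables (R : realType) (S A : finType) (d : option S -> A).

Lemma sum_sd_policy h s (X : A -> R) : \sum_a sd_policy R d h s a * X a = X (d s).
Proof.
rewrite (bigD1 (d s)) //= /sd_policy eqxx mul1r big1 ?addr0 // => a /negbTE ->.
by rewrite mul0r.
Qed.

Lemma is_HR_sd_policy : is_HR (sd_policy R d).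
Proof.
move=> h s; split; first by move=> a; rewrite /sd_policy; case: ifP.
by have := sum_sd_policy h s (fun _ => 1); under eq_bigr do rewrite mulr1.
Qed.

End StationaryDeterministic.

Section TrajectoryExpectation.
Variables (R : realType) (S A : finType) (p : option S -> A -> option S -> R).
Implicit Types (pi : policy S A R) (F G : seq (option S * A * option S) -> R).

Lemma trajE_add pi n h s F G :
  trajE p pi n h s (fun tr => F tr + G tr) = trajE p pi n h s F + trajE p pi n h s G.
Proof.
elim: n h s F G => [|n IH] h s F G //=.
rewrite -big_split /=; apply: eq_bigr => a _; rewrite -mulrDr; congr (_ * _).
rewrite -big_split /=; apply: eq_bigr => s' _; rewrite -mulrDr; congr (_ * _).
exact: IH.
Qed.

Lemma trajE_scale pi n h s c F :
  trajE p pi n h s (fun tr => c * F tr) = c * trajE p pi n h s F.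
Proof.
elim: n h s F => [|n IH] h s F //=.
rewrite mulr_sumr; apply: eq_bigr => a _; rewrite mulrCA; congr (_ * _).
rewrite mulr_sumr; apply: eq_bigr => s' _; rewrite mulrCA; congr (_ * _).
exact: IH.
Qed.

Lemma trajE_sum (I : finType) pi n h s (F : I -> seq (option S * A * option S) -> R) :
  trajE p pi n h s (fun tr => \sum_i F i tr) = \sum_i trajE p pi n h s (F i).
Proof.
elim: n h s F => [|n IH] h s F //=.
rewrite exchange_big /=; apply: eq_bigr => a _; rewrite -mulr_sumr; congr (_ * _).
rewrite exchange_big /=; apply: eq_bigr => s' _; rewrite -mulr_sumr; congr (_ * _).
exact: IH.
Qed.

Hypothesis p_ge0 : forall s a s', 0 <= p s a s'.
Hypothesis p_sum1 : forall s a, \sum_(s' : option S) p s a s' = 1.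

Lemma sum_policy_cst pi h s c : is_HR pi -> \sum_a pi h s a * c = c.
Proof. by move=> pi_HR; rewrite -mulr_suml (proj2 (pi_HR h s)) mul1r. Qed.

Lemma trajE_cst pi n h s c : is_HR pi -> trajE p pi n h s (fun _ => c) = c.
Proof.
move=> pi_HR; elim: n h s => [|n IH] h s //=.
under eq_bigr do under eq_bigr do rewrite IH.
under eq_bigr do rewrite -mulr_suml p_sum1 mul1r.
exact: sum_policy_cst.
Qed.

Lemma trajE_le pi n h s F G : is_HR pi ->
  (forall tr, F tr <= G tr) -> trajE p pi n h s F <= trajE p pi n h s G.
Proof.
move=> pi_HR; elim: n h s F G => [|n IH] h s F G FG //=.
apply: ler_sum => a _; apply: ler_wpM2l; first exact: (proj1 (pi_HR h s)).
by apply: ler_sum => s' _; apply: ler_wpM2l => //; apply: IH.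
Qed.

Lemma trajE_ge0 pi n h s F : is_HR pi -> (forall tr, 0 <= F tr) ->
  0 <= trajE p pi n h s F.
Proof. by move=> pi_HR F_ge0; rewrite -(trajE_cst n h s 0 pi_HR) trajE_le. Qed.

Variable mu : S -> R.
Hypothesis mu_ge0 : forall s, 0 <= mu s.
Hypothesis mu_sum1 : \sum_(s : S) mu s = 1.

Lemma expect_add pi n F G :
  expect p mu pi n (fun tr => F tr + G tr) = expect p mu pi n F + expect p mu pi n G.
Proof. by rewrite /expect -big_split; apply: eq_bigr => s _; rewrite trajE_add mulrDr. Qed.

Lemma expect_scale pi n k F :
  expect p mu pi n (fun tr => k * F tr) = k * expect p mu pi n F.
Proof. by rewrite /expect mulr_sumr; apply: eq_bigr => s _; rewrite trajE_scale mulrCA. Qed.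

Lemma expect_cst pi n c : is_HR pi -> expect p mu pi n (fun _ => c) = c.
Proof.
by move=> pi_HR; rewrite /expect; under eq_bigr do rewrite trajE_cst //; rewrite -mulr_suml mu_sum1 mul1r.
Qed.

Lemma expect_le pi n F G : is_HR pi -> (forall tr, F tr <= G tr) ->
  expect p mu pi n F <= expect p mu pi n G.
Proof. by move=> pi_HR FG; apply: ler_sum => s _; rewrite ler_wpM2l ?trajE_le. Qed.

Lemma expect_le_cst pi n F c : (forall s, trajE p pi n [::] (Some s) F <= c) ->
  expect p mu pi n F <= c.
Proof.
move=> Fc; apply: (@le_trans _ _ (\sum_s mu s * c)).
  by apply: ler_sum => s _; rewrite ler_wpM2l.
by rewrite -mulr_suml mu_sum1 mul1r.
Qed.

End TrajectoryExpectation.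

Section ExpInequalities.
Variable R : realType.
Implicit Types a b c x y z : R.

Lemma expR_tangent_le a x : expR a * (1 + (x - a)) <= expR x.
Proof.
rewrite -[X in _ <= expR X](subrK a x) expRD [X in _ <= X]mulrC.
by rewrite ler_wpM2l ?expR_ge0 ?expR_ge1Dx.
Qed.

Lemma expR_le_1Dx_sqr z : expR z <= 1 + z + z ^+ 2 * expR `|z|.
Proof.
have ez := expR_gt0 z.
have e1 : expR z * (1 - z) <= 1.
  by have := expR_tangent_le z 0; rewrite expR0 add0r.
have e2 : z * (expR z - 1) <= z ^+ 2 * expR `|z|.
  have [z0|z0] := leP 0 z.
    by rewrite ger0_norm // expr2 -mulrA ler_wpM2l //; lra.
  have h1 : 1 <= expR `|z| by rewrite -expR0 ler_expR.
  have h2 : z * (expR z - 1) <= z * z.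
    by rewrite ler_nM2l //; have := expR_ge1Dx z; lra.
  by apply: (le_trans h2); rewrite -expr2 ler_peMr // sqr_ge0.
lra.
Qed.

Lemma sqr_le_4expR y : 0 <= y -> y ^+ 2 <= 4 * expR y.
Proof.
move=> y0; have h := expR_ge1Dx (y / 2).
have h2 : (1 + y / 2) ^+ 2 <= expR (y / 2) ^+ 2 by rewrite lerXn2r ?nnegrE //; lra.
by rewrite -expRM_natr -mulr_natr divfK // in h2; nra.
Qed.

(* The remainder [x^2 expR (b |x|)] is at most [(4 / c)^2 expR (c |x|)], by [y^2 <= 4 expR y] at [y = c |x| / 2]. *)
Lemma expR_le_second_order c b x : 0 < c -> 0 <= b -> b <= c / 2 ->
  expR (- b * x) <= 1 + - b * x + b ^+ 2 * (4 / c) ^+ 2 * (expR (c * x) + expR (- c * x)).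
Proof.
move=> c0 b0 bc.
apply: (le_trans (expR_le_1Dx_sqr _)).
rewrite -mulrA lerD2l mulNr sqrrN normrN exprMn -mulrA ler_wpM2l ?sqr_ge0 //.
set y := c * `|x| / 2.
have y0 : 0 <= y by rewrite /y !mulr_ge0 // ltW.
have x2 : x ^+ 2 = (2 / c) ^+ 2 * y ^+ 2.
  by rewrite -real_normK ?num_real // /y; field; rewrite gt_eqF.
have ebx : expR `|b * x| <= expR y.
  by rewrite ler_expR normrM ger0_norm // /y mulrAC ler_wpM2r.
have e2y : expR y * expR y <= expR (c * x) + expR (- c * x).
  rewrite -expRD /y -splitr; have [x0|x0] := leP 0 x.
    by rewrite ger0_norm // lerDl expR_ge0.
  by rewrite ltr0_norm // mulrN -mulNr lerDr expR_ge0.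
apply: (@le_trans _ _ ((2 / c) ^+ 2 * (4 * expR y) * expR y)).
  rewrite x2; apply: ler_pM => //; first exact: mulr_ge0 (sqr_ge0 _) (sqr_ge0 _).
  by rewrite ler_wpM2l ?sqr_ge0 ?sqr_le_4expR.
have -> : (4 / c) ^+ 2 = (2 / c) ^+ 2 * 4 by field; rewrite gt_eqF.
have -> : (2 / c) ^+ 2 * (4 * expR y) * expR y = (2 / c) ^+ 2 * 4 * (expR y * expR y) by ring.
by rewrite ler_wpM2l // mulr_ge0 ?sqr_ge0.
Qed.

End ExpInequalities.

Section EntropicRisk.
Variables (R : realType) (S A : finType) (p : option S -> A -> option S -> R) (mu : S -> R).
Hypothesis p_ge0 : forall s a s', 0 <= p s a s'.
Hypothesis p_sum1 : forall s a, \sum_(s' : option S) p s a s' = 1.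
Hypothesis mu_ge0 : forall s, 0 <= mu s.
Hypothesis mu_sum1 : \sum_(s : S) mu s = 1.
Variables (pi : policy S A R) (n : nat) (X : seq (option S * A * option S) -> R).
Hypothesis pi_HR : is_HR pi.

Local Notation E := (expect p mu pi n).

Lemma expR_expect_le b : expR (b * E X) <= E (fun tr => expR (b * X tr)).
Proof.
set m := E X.
have tangent tr : expR (b * m) * (1 - b * m) + expR (b * m) * b * X tr <= expR (b * X tr).
  rewrite (_ : _ + _ = expR (b * m) * (1 + (b * X tr - b * m))) ?expR_tangent_le //.
  by ring.
have := expect_le p_ge0 mu_ge0 n pi_HR tangent.
by rewrite expect_add expect_cst // expect_scale -/m -mulrA -mulrDr subrK mulr1.
Qed.

Lemma erm_le_expect b : 0 < b -> - b^-1 * ln (E (fun tr => expR (- b * X tr))) <= E X.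
Proof.
move=> b_gt0; set Z := E _.
have jensen := expR_expect_le (- b); rewrite -/Z in jensen.
have lnZ : - b * E X <= ln Z by rewrite -ler_expR lnK // posrE (lt_le_trans (expR_gt0 _) jensen).
have binv_ge0 : 0 <= b^-1 by rewrite invr_ge0 ltW.
have := ler_wpM2l binv_ge0 lnZ.
by rewrite mulrA mulrN mulVf ?gt_eqF // mulN1r mulNr; lra.
Qed.

Lemma expect_sub_le_erm c D : 0 < c ->
  (forall gam, `|gam| <= c -> E (fun tr => expR (gam * X tr)) <= D) ->
  forall b, 0 < b -> b <= c / 2 ->
  E X - 2 * D * (4 / c) ^+ 2 * b <= - b^-1 * ln (E (fun tr => expR (- b * X tr))).
Proof.
move=> c_gt0 moment b b_gt0 bc; set Z := E (fun tr => expR (- b * X tr)).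
set m := E X; set K := (4 / c) ^+ 2.
have Z_gt0 : 0 < Z := lt_le_trans (expR_gt0 _) (expR_expect_le (- b)).
have Zle : Z <= 1 - b * m + b ^+ 2 * K * (D + D).
  have := expect_le p_ge0 mu_ge0 n pi_HR
    (fun tr => expR_le_second_order (X tr) c_gt0 (ltW b_gt0) bc).
  rewrite !expect_add expect_cst // !expect_scale -/m => /le_trans; apply.
  have bK_ge0 : 0 <= b ^+ 2 * K by rewrite mulr_ge0 ?sqr_ge0.
  rewrite mulNr lerD2l ler_wpM2l // expect_add.
  by rewrite lerD ?moment // ?normrN gtr0_norm.
have lnZ : ln Z <= - b * m + b ^+ 2 * K * (D + D).
  by have := le_ln1Dx (x := Z - 1); rewrite (addrC 1) subrK => /(_ _)/le_trans; apply; lra.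
have binv_ge0 : 0 <= b^-1 by rewrite invr_ge0 ltW.
have := ler_wpM2l binv_ge0 lnZ.
have -> : b^-1 * (- b * m + b ^+ 2 * K * (D + D)) = - m + b * (K * (D + D)).
  by field; rewrite gt_eqF.
by rewrite mulNr; lra.
Qed.

End EntropicRisk.

Section RightLimitSandwich.
Variable R : realType.

Let cvg_scale_at_right0 (C : R) : C * b @[b --> 0^'+] --> 0.
Proof.
rewrite -[X in _ --> X](mulr0 C); apply: cvgM; first exact: cvg_cst.
by apply: cvg_at_right_filter; exact: cvg_id.
Qed.

Lemma cvgr_at_right_sandwich (f : R -> R) (L C b0 : R) : 0 < b0 ->
  (forall b, 0 < b -> b <= b0 -> L - C * b <= f b <= L) ->
  f b @[b --> 0^'+] --> L.
Proof.
move=> b0_gt0 sandwich; apply: (squeeze_cvgr _ _ (cvg_cst L)).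
  near=> b; apply: sandwich; near: b; [exact: nbhs_right_gt | exact: nbhs_right_le].
by rewrite -[X in _ --> X]subr0; apply: cvgB; [exact: cvg_cst | exact: cvg_scale_at_right0].
Unshelve. all: by end_near.
Qed.

Local Open Scope ereal_scope.

Lemma cvge_at_right_sandwich (f : R -> \bar R) (u : \bar R) (C b0 : R) : (0 < b0)%R ->
  (forall b, (0 < b)%R -> (b <= b0)%R -> u - (C * b)%:E <= f b <= u) ->
  f b @[b --> 0^'+] --> u.
Proof.
move=> b0_gt0 sandwich; apply: (squeeze_cvge _ _ (cvg_cst u)).
  near=> b; apply: sandwich; near: b; [exact: nbhs_right_gt | exact: nbhs_right_le].
rewrite -[X in _ --> X]adde0 -oppe0; apply: cvgeD.
- exact: fin_num_adde_defl.
- exact: cvg_cst.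
apply: cvgeN; apply: cvg_EFin; first exact: nearW.
exact: cvg_scale_at_right0.
Unshelve. all: by end_near.
Qed.

Lemma le_limn_einf (u v : (\bar R)^nat) : (forall n, u n <= v n) ->
  limn_einf u <= limn_einf v.
Proof.
move=> uv; rewrite !limn_einf_lim.
apply: lee_lim; [exact/is_cvg_einfs | exact/is_cvg_einfs |].
apply: nearW => n; apply: le_ereal_inf_tmp => _ [k /= nk <-].
by apply: le_trans (uv k); apply: ereal_inf_lbound; exists k.
Qed.

Lemma limn_einf_at_right_sandwich (u : (\bar R)^nat) (v : R -> (\bar R)^nat) (C b0 : R) :
  (0 < b0)%R ->
  (forall b, (0 < b)%R -> (b <= b0)%R -> forall n, u n - (C * b)%:E <= v b n <= u n) ->
  limn_einf (v b) @[b --> 0^'+] --> limn_einf u.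
Proof.
move=> b0_gt0 sandwich; apply: (cvge_at_right_sandwich b0_gt0) => b b_gt0 bb0.
have /all_and2[lo hi] n := andP (sandwich b b_gt0 bb0 n).
rewrite le_limn_einf // andbT addeC -limn_einf_shift //.
by apply: le_limn_einf => n; rewrite addeC.
Qed.

Lemma ereal_sup_sandwich (T : Type) (P : set T) (f h : T -> R) (e : R) :
  (forall x, P x -> (h x - e <= f x <= h x)%R) ->
  ereal_sup [set (h x)%:E | x in P] - e%:E <= ereal_sup [set (f x)%:E | x in P]
    <= ereal_sup [set (h x)%:E | x in P].
Proof.
move=> sandwich; apply/andP; split.
  rewrite leeBlDr //; apply: ge_ereal_sup => _ [x Px <-].
  have /andP[lo _] := sandwich x Px; rewrite lerBlDr -lee_fin EFinD in lo.
  by apply: (le_trans lo); rewrite leeD2r //; apply: ereal_sup_ubound; exists x.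
apply: ge_ereal_sup => _ [x Px <-]; have /andP[_ hi] := sandwich x Px.
by apply: le_trans (_ : (h x)%:E <= _); [rewrite lee_fin | apply: ereal_sup_ubound; exists x].
Qed.

End RightLimitSandwich.

Section TransientVisits.
Variables (R : realType) (S A : finType) (p : option S -> A -> option S -> R).
Hypothesis p_ge0 : forall s a s', 0 <= p s a s'.
Hypothesis p_sum1 : forall s a, \sum_(s' : option S) p s a s' = 1.
Hypothesis p_sink : forall a, p None a None = 1.

Lemma sum_sink a (f : option S -> R) : \sum_s' p None a s' * f s' = f None.
Proof.
have out_sink0 : \sum_(s' | s' != None) p None a s' = 0.
  have := p_sum1 None a; rewrite (bigD1 None) //= p_sink => /eqP.
  by rewrite -[X in _ == X]addr0 (inj_eq (addrI 1)) => /eqP.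
rewrite (bigD1 None) //= p_sink mul1r big1 ?addr0 // => s' s'_out.
by rewrite (psumr_eq0P _ out_sink0) ?mul0r.
Qed.

Definition in_states (x : option S) : R := (x != None)%:R.

Definition step_mean (w : option S -> R) x a := \sum_s' p x a s' * w s'.

Lemma step_mean_le w1 w2 x a : (forall y, w1 y <= w2 y) ->
  step_mean w1 x a <= step_mean w2 x a.
Proof. by move=> w12; apply: ler_sum => y _; rewrite ler_wpM2l. Qed.

Lemma step_mean_affine c k w x a :
  step_mean (fun y => c + k * w y) x a = c + k * step_mean w x a.
Proof.
rewrite /step_mean mulr_sumr -[c in RHS]mulr1 -(p_sum1 x a) mulr_sumr -big_split /=.
by apply: eq_bigr => y _; rewrite mulrDr mulrCA mulrC.
Qed.

Section OptimalVisits.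
Variable a0 : A.

Definition greedy (w : option S -> R) x : A := [arg max_(a > a0) step_mean w x a]%O.

Lemma step_mean_le_greedy w x a : step_mean w x a <= step_mean w x (greedy w x).
Proof. by rewrite /greedy; case: arg_maxP => // a' _; apply. Qed.

(* Value iteration for the largest expected number of visits to the states within [n] steps; [a0] is only the default of the [arg max]. *)
Fixpoint opt_visits n : option S -> R :=
  if n is n'.+1 then fun x => in_states x + step_mean (opt_visits n') x (greedy (opt_visits n') x)
  else fun _ => 0.

Lemma opt_visits_sink n : opt_visits n None = 0.
Proof. by elim: n => //= n IH; rewrite /in_states /step_mean sum_sink IH addr0. Qed.

Lemma opt_visits_ge0 n x : 0 <= opt_visits n x.
Proof.
elim: n x => //= n IH x.
by rewrite addr_ge0 ?ler0n // sumr_ge0 // => y _; rewrite mulr_ge0.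
Qed.

Lemma opt_visits_leS n x : opt_visits n x <= opt_visits n.+1 x.
Proof.
elim: n x => [|n IH] x; first exact: opt_visits_ge0.
rewrite [opt_visits n.+2 x]/= lerD2l.
exact: le_trans (step_mean_le _ _ IH) (step_mean_le_greedy _ _ _).
Qed.

End OptimalVisits.

Implicit Types d : option S -> A.

Lemma trajE_sd_history d n h s F :
  trajE p (sd_policy R d) n h s F = trajE p (sd_policy R d) n [::] s F.
Proof.
elim: n h s F => [|n IH] h s F //=.
by apply: eq_bigr => a _; congr (_ * _); apply: eq_bigr => s' _; rewrite IH [in RHS]IH.
Qed.

Definition sd_mean d (phi : option S -> R) k s :=
  trajE p (sd_policy R d) k [::] s (fun tr => phi (last s [seq x.2 | x <- tr])).

Lemma sd_meanS d phi k s : sd_mean d phi k.+1 s = step_mean (sd_mean d phi k) s (d s).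
Proof.
rewrite /sd_mean [trajE _ _ k.+1 _ _ _]/= sum_sd_policy.
by apply: eq_bigr => s' _; rewrite trajE_sd_history.
Qed.

Lemma le_sd_mean d phi1 phi2 k s : (forall x, phi1 x <= phi2 x) ->
  sd_mean d phi1 k s <= sd_mean d phi2 k s.
Proof. by move=> phi12; apply: trajE_le => //; exact: is_HR_sd_policy. Qed.

Lemma sd_meanZ d c phi k s : sd_mean d (fun x => c * phi x) k s = c * sd_mean d phi k s.
Proof. exact: trajE_scale. Qed.

Lemma superharmonic_le_sd_visits d w :
  (forall x, w x <= in_states x + step_mean w x (d x)) ->
  forall N s, w s <= \sum_(k < N) sd_mean d in_states k s + sd_mean d w N s.
Proof.
move=> w_super; elim => [|N IH] s; first by rewrite big_ord0 add0r.
rewrite big_ord_recl sd_meanS -addrA (le_trans (w_super s)) // lerD2l /step_mean.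
under [X in _ <= X + _]eq_bigr do rewrite lift0 sd_meanS.
rewrite exchange_big -big_split /=; apply: ler_sum => s' _.
by rewrite -mulr_sumr -mulrDr ler_wpM2l.
Qed.

Lemma sd_visits_state_prob d s K : \sum_(k < K) sd_mean d in_states k (Some s) =
  \sum_(s' : S) \sum_(k < K) state_prob p (sd_policy R d) (Some s) (Some s') k.
Proof.
rewrite exchange_big /=; apply: eq_bigr => k _.
rewrite /sd_mean /state_prob -trajE_sum; congr trajE; apply/funext => tr.
case: (last _ _) => [s'|]; last by rewrite big1.
rewrite /in_states (bigD1 s') //= eqxx big1 ?addr0 // => s'' s''_neq.
by case: eqP => // -[] eq_s; rewrite eq_s eqxx in s''_neq.
Qed.

Hypothesis p_transient : transient p.

(* There are finitely many decision rules, so the visit counts are bounded uniformly. *)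
Lemma sd_visits_bounded : exists L, 0 <= L /\
  forall d s K, \sum_(k < K) sd_mean d in_states k (Some s) <= L.
Proof.
have /choice[M M_ub] : forall i : {ffun option S -> A} * S * S, exists M : R,
    forall K, \sum_(k < K) state_prob p (sd_policy R i.1.1) (Some i.1.2) (Some i.2) k <= M.
  by case=> [[d s] s']; exact: p_transient.
have M_ge0 i : 0 <= M i by have := M_ub i 0%N; rewrite big_ord0.
exists (\sum_i M i); split=> [|d s K]; first exact: sumr_ge0.
have -> : d = finfun d by apply/funext => x; rewrite ffunE.
rewrite sd_visits_state_prob (le_trans (ler_sum _ (fun s' _ => M_ub (finfun d, s, s') K))) //.
have -> : \sum_i M i = \sum_j \sum_(s' : S) M (j, s') by rewrite pair_bigA; apply: eq_bigr => -[].
by apply: (ler_term_sum (finfun d, s)) => i; exact: sumr_ge0.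
Qed.

(* Summing the unrolled inequality over the horizons [N < K] gives [K w <= K L + L w] at a maximiser of [w]; take [K > 2 L]. *)
Lemma superharmonic_bounded d w L : 0 <= L ->
  (forall s K, \sum_(k < K) sd_mean d in_states k (Some s) <= L) ->
  w None = 0 -> (forall x, w x <= in_states x + step_mean w x (d x)) ->
  forall x, w x <= 2 * L.
Proof.
move=> L_ge0 visits_le w_sink w_super x.
have [xm wm] : exists xm, forall y, w y <= w xm.
  by exists [arg max_(y > None) w y]%O => y; case: arg_maxP => // ym _; apply.
apply: le_trans (wm x) _; case: xm wm => [s|] wm; last by rewrite w_sink mulr_ge0.
set W := w (Some s); have W_ge0 : 0 <= W by rewrite -w_sink wm.
have W_unrolled N : W <= L + W * sd_mean d in_states N (Some s).
  apply: le_trans (superharmonic_le_sd_visits w_super N (Some s)) _.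
  rewrite lerD ?visits_le // -sd_meanZ le_sd_mean // => -[y|]; last by rewrite w_sink /in_states mulr0.
  by rewrite /in_states /= mulr1 wm.
have W_sum K : K%:R * W <= K%:R * L + W * L.
  have : \sum_(N < K) W <= \sum_(N < K) (L + W * sd_mean d in_states N (Some s)).
    by apply: ler_sum => N _; exact: W_unrolled.
  rewrite big_split /= -mulr_sumr !sumr_const card_ord !mulr_natl => /le_trans; apply.
  by rewrite lerD2l ler_wpM2l ?visits_le.
pose K := (Num.truncn (2 * L)).+1.
have K_gt : 2 * L < K%:R by exact: truncnS_gt.
have := W_sum K; nra.
Qed.

Lemma opt_visits_bounded a0 : exists B, 0 < B /\ forall n x, opt_visits a0 n x <= B.
Proof.
have [L [L_ge0 visits_le]] := sd_visits_bounded.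
exists (2 * L + 1); split=> [|[|n] x]; [lra | rewrite /=; lra |].
apply: le_trans (_ : 2 * L <= _); last lra.
apply: (superharmonic_bounded (d := greedy a0 (opt_visits a0 n))) => // [|y].
  exact: opt_visits_sink.
by rewrite [opt_visits _ n.+1 y]/= lerD2l step_mean_le // => z; exact: opt_visits_leS.
Qed.

End TransientVisits.

Lemma ret_cons (R : realType) (S A : finType) (r : option S -> A -> option S -> R) x tr :
  ret r (x :: tr) = r x.1.1 x.1.2 x.2 + ret r tr.
Proof. by rewrite /ret big_cons. Qed.

Section ExponentialMoment.
Variables (R : realType) (S A : finType) (p r : option S -> A -> option S -> R).
Hypothesis p_ge0 : forall s a s', 0 <= p s a s'.
Hypothesis p_sum1 : forall s a, \sum_(s' : option S) p s a s' = 1.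
Hypothesis p_sink : forall a, p None a None = 1.
Hypothesis r_sink : forall a, r None a None = 0.
Variables (a0 : A) (B gam lam : R).
Hypothesis opt_visits_le : forall n x, opt_visits p a0 n x <= B.
Hypothesis expR_r_le : forall x a s', expR (gam * r x a s') <= lam.
Hypothesis lam_ge1 : 1 <= lam.
Hypothesis lam_B : (lam - 1) * B <= 1.

(* Outside the sink each step multiplies the moment by at most [lam], which the bound absorbs since [lam v <= 1 + v] when [(lam - 1) v <= 1]. *)
Lemma trajE_expR_ret_le pi : is_HR pi -> forall n h s,
  trajE p pi n h s (fun tr => expR (gam * ret r tr)) <= 1 + opt_visits p a0 n s.
Proof.
move=> pi_HR; elim => [|n IH] h s; first by rewrite /= /ret big_nil mulr0 expR0 addr0.
set T := fun h' s' => trajE p pi n h' s' (fun tr => expR (gam * ret r tr)).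
have step a s' : trajE p pi n (rcons h (s, a)) s' (fun tr => expR (gam * ret r ((s, a, s') :: tr)))
    = expR (gam * r s a s') * T (rcons h (s, a)) s'.
  by rewrite -trajE_scale; congr trajE; apply/funext => tr; rewrite ret_cons mulrDr expRD.
rewrite [trajE _ _ n.+1 _ _ _]/=; under eq_bigr do under eq_bigr do rewrite step.
have pi_ge0 a : 0 <= pi h s a := proj1 (pi_HR h s) a.
case: s pi_ge0 step => [y|] pi_ge0 _.
- set V := opt_visits p a0 n.+1 (Some y).
  apply: le_trans (_ : \sum_a pi h (Some y) a * (lam * V) <= _); last first.
    rewrite sum_policy_cst //; have := opt_visits_le n.+1 (Some y); rewrite -/V => V_le.
    have : (lam - 1) * V <= 1 by apply: le_trans lam_B; rewrite ler_wpM2l // subr_ge0.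
    lra.
  apply: ler_sum => a _; rewrite ler_wpM2l //.
  apply: le_trans (_ : step_mean p (fun s' => lam + lam * opt_visits p a0 n s') (Some y) a <= _).
    apply: ler_sum => s' _; rewrite ler_wpM2l // -[lam in lam + _]mulr1 -mulrDr.
    rewrite ler_pM ?expR_ge0 ?IH //.
    by apply: trajE_ge0 => // tr; exact: expR_ge0.
  rewrite step_mean_affine // /V /= /in_states /= mulrDr mulr1 lerD2l ler_wpM2l ?step_mean_le_greedy //.
  exact: le_trans ler01 lam_ge1.
- apply: le_trans (_ : \sum_a pi h None a * 1 <= _).
    apply: ler_sum => a _; rewrite ler_wpM2l // (sum_sink p_ge0 p_sum1 p_sink) r_sink mulr0 expR0 mul1r.
    by have := IH (rcons h (None, a)) None; rewrite (opt_visits_sink p_ge0 p_sum1 p_sink) addr0.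
  by rewrite sum_policy_cst // (opt_visits_sink p_ge0 p_sum1 p_sink) addr0.
Qed.

End ExponentialMoment.

Section RiskNearZero.
Variables (R : realType) (S A : finType) (p r : option S -> A -> option S -> R) (mu : S -> R).
Hypothesis p_ge0 : forall s a s', 0 <= p s a s'.
Hypothesis p_sum1 : forall s a, \sum_(s' : option S) p s a s' = 1.
Hypothesis p_sink : forall a, p None a None = 1.
Hypothesis r_sink : forall a, r None a None = 0.
Hypothesis mu_ge0 : forall s, 0 <= mu s.
Hypothesis mu_sum1 : \sum_(s : S) mu s = 1.
Hypothesis p_transient : transient p.
Variable a0 : A.

(* [c] is chosen so that [expR (c rmax) <= 1 + 1/B], where [rmax] bounds [|r|] and [B] the optimal visit counts. *)
Lemma transient_expR_ret_bounded : exists c D : R, 0 < c /\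
  forall pi, is_HR pi -> forall n gam, `|gam| <= c ->
    expect p mu pi n (fun tr => expR (gam * ret r tr)) <= D.
Proof.
have [B [B_gt0 opt_visits_le]] := opt_visits_bounded p_ge0 p_sum1 p_sink p_transient a0.
pose rmax := \sum_(i : option S * A * option S) `|r i.1.1 i.1.2 i.2|.
have r_le x a s' : `|r x a s'| <= rmax by exact: (ler_term_sum (x, a, s')).
have rmax_ge0 : 0 <= rmax by rewrite sumr_ge0.
have l_gt0 : 0 < ln (1 + B^-1) by rewrite ln_gt0 // ltrDl invr_gt0.
pose c := ln (1 + B^-1) / (rmax + 1).
have c_gt0 : 0 < c by rewrite divr_gt0 // ltr_wpDl.
have c_rmax : c * rmax <= ln (1 + B^-1).
  by rewrite mulrAC ler_pdivrMr ?ltr_wpDl // ler_pM2l // lerDl.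
pose lam := expR (c * rmax).
have lam_ge1 : 1 <= lam by rewrite /lam -expR0 ler_expR mulr_ge0 // ltW.
have lam_B : (lam - 1) * B <= 1.
  rewrite -ler_pdivlMr // mul1r lerBlDl.
  by rewrite -[X in _ <= X]lnK ?ler_expR // posrE ltr_wpDr ?invr_ge0 ?ltW.
exists c, (1 + B); split=> // pi pi_HR n gam gam_le.
have expR_r_le x a s' : expR (gam * r x a s') <= lam.
  by rewrite ler_expR (le_trans (ler_norm _)) // normrM ler_pM ?normr_ge0 ?r_le.
apply: (expect_le_cst mu_ge0 mu_sum1) => s.
apply: le_trans (trajE_expR_ret_le p_ge0 p_sum1 p_sink r_sink opt_visits_le expR_r_le
  lam_ge1 lam_B pi_HR n [::] (Some s)) _.
by rewrite lerD2l.
Qed.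

Lemma g_sandwich : exists C b0 : R, 0 < b0 /\
  forall pi, is_HR pi -> forall t b, 0 < b -> b <= b0 ->
    g p r mu pi t 0 - C * b <= g p r mu pi t b <= g p r mu pi t 0.
Proof.
have [c [D [c_gt0 moment]]] := transient_expR_ret_bounded.
exists (2 * D * (4 / c) ^+ 2), (c / 2); split=> [|pi pi_HR t b b_gt0 b_le].
  by rewrite divr_gt0.
have -> : g p r mu pi t 0 = expect p mu pi t.+1 (ret r) by rewrite /g eqxx.
rewrite /g gt_eqF //; apply/andP; split.
  exact: (expect_sub_le_erm p_ge0 p_sum1 mu_ge0 mu_sum1 pi_HR c_gt0 (moment pi pi_HR t.+1)).
exact: (erm_le_expect p_ge0 p_sum1 mu_ge0 mu_sum1 _ _ pi_HR b_gt0).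
Qed.

End RiskNearZero.

Theorem lemma10 (R : realType) (S A : finType)
  (p r : option S -> A -> option S -> R) (mu : S -> R)
  (p_ge0 : forall s a s', 0 <= p s a s')
  (p_sum1 : forall s a, \sum_(s' : option S) p s a s' = 1)
  (p_sink : forall a, p None a None = 1)
  (r_sink : forall a, r None a None = 0)
  (mu_gt0 : forall s, 0 < mu s)
  (mu_sum1 : \sum_(s : S) mu s = 1)
  (Htrans : transient p)
  (d : option S -> A) (t : nat) :
  [/\ g p r mu (sd_policy R d) t beta @[beta --> (0:R)^'+] --> g p r mu (sd_policy R d) t 0,
      gstar p r mu t beta @[beta --> (0:R)^'+] --> gstar p r mu t 0,
      ginf p r mu (sd_policy R d) beta @[beta --> (0:R)^'+] --> ginf p r mu (sd_policy R d) 0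
    & gstarinf p r mu beta @[beta --> (0:R)^'+] --> gstarinf p r mu 0].
Proof.
have mu_ge0 s : 0 <= mu s := ltW (mu_gt0 s).
have [C [b0 [b0_gt0 g_near0]]] :=
  g_sandwich p_ge0 p_sum1 p_sink r_sink mu_ge0 mu_sum1 Htrans (d None).
have gstar_near0 t' b : 0 < b -> b <= b0 ->
    (gstar p r mu t' 0 - (C * b)%:E <= gstar p r mu t' b <= gstar p r mu t' 0)%E.
  by move=> b_gt0 b_le; apply: ereal_sup_sandwich => pi pi_HR; exact: g_near0.
have sd_HR := is_HR_sd_policy R d.
split.
- exact: cvgr_at_right_sandwich b0_gt0 (g_near0 _ sd_HR t).
- exact: cvge_at_right_sandwich b0_gt0 (gstar_near0 t).
- apply: limn_einf_at_right_sandwich b0_gt0 _ => b b_gt0 b_le n.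
  by rewrite -EFinB !lee_fin; exact: g_near0.
- exact: limn_einf_at_right_sandwich b0_gt0 (fun b b_gt0 b_le n => gstar_near0 n b b_gt0 b_le).
Qed.
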